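(* Let $n \geq 1$ and let \[ P(z,\bar z) = \sum_{j=0}^n \alpha_{j,n-j} z^j \bar z^{\,n-j} + P_{n-1}(z,\bar z) \] be a polyanalytic polynomial, where $\alpha_{j,n-j}\in\mathbb{C}$ and $P_{n-1}$ is a polyanalytic polynomial with $\deg(P_{n-1}) \leq n-1$. Suppose there exists $\ell \in \{0,1,\ldots,n\}$ with $2\ell \neq n$ such that \[ |\alpha_{\ell,n-\ell}| > \sum_{j=0,\, j\neq \ell}^n |\alpha_{j,n-j}|. \] Then $P$ has at least one zero in $\mathbb{C}$. In particular, every polyanalytic polynomial of the form $P(z,\bar z) = \alpha_{\ell,n-\ell} z^\ell \bar z^{\,n-\ell} + P_{n-1}(z,\bar z)$ with $n\geq 1$, $\alpha_{\ell,n-\ell}\neq 0$, $2\ell\neq n$ and $\deg(P_{n-1})\leq n-1$ has at least one zero.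
   Context: A polyanalytic polynomial is a function $\mathbb{C}\to\mathbb{C}$ of the form $P(z,\bar z)=\sum_{k=0}^n\sum_{j=0}^k \alpha_{j,k-j} z^j \bar z^{\,k-j}$ with complex coefficients $\alpha_{j,k-j}$ (i.e. a polynomial in $z$ and $\bar z$); two such polynomials are equal iff all coefficients agree. Its degree $\deg(P)$ is the largest $j+k$ such that the coefficient of $z^j\bar z^k$ is nonzero. A zero of $P$ is a point $z\in\mathbb{C}$ with $P(z,\bar z)=0$. *)

From HB Require Import structures.
From mathcomp Require Import all_boot all_order all_algebra.
From mathcomp Require Import reals.
From mathcomp Require Export complex.
Set Implicit Arguments. Unset Strict Implicit. Unset Printing Implicit Defensive.
Import Order.TTheory GRing.Theory Num.Theory.
Local Open Scope ring_scope.

Definition polyan_eval (R : realType) (n : nat) (alpha : nat -> nat -> R[i])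
  (z : R[i]) : R[i] :=
  \sum_(k < n.+1) \sum_(j < k.+1) alpha j (k - j)%N * z ^+ j * (z^*) ^+ (k - j)%N.

From HB Require Import structures.
From mathcomp Require Import all_boot all_order all_algebra.
From mathcomp Require Import reals complex.
From mathcomp Require Import all_classical all_reals all_analysis.
From mathcomp Require Import ring lra.
Import Order.TTheory GRing.Theory Num.Theory.
Import numFieldNormedType.Exports.
Set Implicit Arguments. Unset Strict Implicit. Unset Printing Implicit Defensive.
Local Open Scope classical_set_scope.
Local Open Scope ring_scope.

(* A discrete winding-number argument.  If P had no zero, the
   loop t |-> P(r e^{it}) could be shrunk to the constant loop P(0) through
   loops avoiding 0, so it would wind 0 times around 0.  For r large the
   dominant term alpha_l z^l zbar^(n-l) is larger than the rest of P on the
   circle |z| = r, so the loop winds as often as r^n e^{i(2l-n)t}, i.e.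
   2l - n != 0 times.  Winding numbers are computed on fine polygons as sums
   of angles atan (Im w / Re w) of consecutive ratios w, which only requires
   elementary trigonometry and uniform continuity of P on discs. *)

Section Modulus.
Variable R : realType.
Implicit Types (z w : R[i]) (x : R).
Local Notation normc := (@Normc.normc R).
Local Notation Re := (@complex.Re R).

Lemma normrE_normc z : `|z| = (normc z)%:C%C.
Proof. by []. Qed.

Lemma normc_ge0 z : 0 <= normc z.
Proof. by rewrite -ler0c -normrE_normc. Qed.

Lemma normc_eq0 z : (normc z == 0) = (z == 0).
Proof. by apply/eqP/eqP => [/Normc.eq0_normc|->] //; exact: Normc.normc0. Qed.

Lemma normcX z k : normc (z ^+ k) = normc z ^+ k.
Proof. by apply: (@complexI R); rewrite -normrE_normc normrX normrE_normc rmorphXn. Qed.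

Lemma normc_conj z : normc z^*%C = normc z.
Proof. by apply: (@complexI R); rewrite -!normrE_normc normcJ. Qed.

Lemma normc_real x : normc x%:C%C = `|x|.
Proof. by rewrite /= expr0n /= addr0 sqrtr_sqr. Qed.

Lemma normcB_sym z w : normc (z - w) = normc (w - z).
Proof. by rewrite -normcN opprB. Qed.

Lemma ler_normc_sum (I : Type) (r : seq I) (P : pred I) (F : I -> R[i]) :
  normc (\sum_(i <- r | P i) F i) <= \sum_(i <- r | P i) normc (F i).
Proof. by rewrite -lecR -normrE_normc raddf_sum; apply: ler_norm_sum. Qed.

Lemma ler_normcB z w : `|normc z - normc w| <= normc (z - w).
Proof.
have := le_normcD (z - w) w; have := le_normcD (w - z) z.
by rewrite !subrK normcB_sym ler_norml; lra.
Qed.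

Lemma normc_le_abs (a b : R) : normc (a +i* b)%C <= `|a| + `|b|.
Proof.
have -> : (a +i* b)%C = a%:C%C + b%:C%C * 'i%C.
  by apply/eqP; rewrite eq_complex /= !mulr0 !mul0r subr0 !addr0 add0r mulr1 !eqxx.
apply: le_trans (le_normcD _ _) _; rewrite Normc.normcM !normc_real.
by rewrite /= expr0n expr1n /= add0r sqrtr1 mulr1.
Qed.

Lemma abs_le_normc (a b : R) : `|a| <= normc (a +i* b)%C /\ `|b| <= normc (a +i* b)%C.
Proof. by split; rewrite /= -sqrtr_sqr ler_wsqrtr // ?lerDl ?lerDr sqr_ge0. Qed.

Lemma Re_gt0_near1 z : normc (z - 1) < 1 -> 0 < Re z.
Proof.
move=> h; have : `|Re z - 1| < 1.
  apply: le_lt_trans h; case: z => a b /=.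
  by rewrite -sqrtr_sqr ler_wsqrtr // lerDl sqr_ge0.
by rewrite ltr_norml; lra.
Qed.

Lemma normc_divB1 z w : w != 0 -> normc (z / w - 1) = normc (z - w) / normc w.
Proof. by move=> w0; rewrite -Normc.normcV -Normc.normcM mulrBl divff. Qed.

(* Uses the junk value [z / 0 = 0]. *)
Lemma near1_div_neq0 z w : normc (z / w - 1) < 1 -> z != 0 /\ w != 0.
Proof.
move=> h; split; apply: contraTneq h => ->;
  by rewrite ?mul0r ?invr0 ?mulr0 sub0r normcN Normc.normc1 ltxx.
Qed.

Lemma near1_div z w : normc (z - 1) <= 1 / 4 -> normc (w - 1) <= 1 / 4 ->
  normc (w / z - 1) < 1.
Proof.
move=> hz hw.
have nz : 3 / 4 <= normc z.
  by have := le_normcD (1 - z) z; rewrite subrK Normc.normc1 normcB_sym; lra.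
have z0 : z != 0 by rewrite -normc_eq0; apply/eqP => e; rewrite e in nz; lra.
have hwz : normc (w - z) <= 1 / 2.
  by have := le_normcD (w - 1) (1 - z); rewrite addrA subrK [normc (1 - z)]normcB_sym; lra.
by rewrite normc_divB1 // ltr_pdivrMr ?mul1r; lra.
Qed.

Definition polyan_monomial (a : R[i]) (j k : nat) z : R[i] := a * z ^+ j * z^*%C ^+ k.

Lemma normc_polyan_monomial a j k z :
  normc (polyan_monomial a j k z) = normc a * normc z ^+ (j + k).
Proof. by rewrite !Normc.normcM !normcX normc_conj exprD mulrA. Qed.

End Modulus.

Section Winding.
Variable R : realType.
Local Notation normc := (@Normc.normc R).
Local Notation Re := (@complex.Re R).
Local Notation Im := (@complex.Im R).

Lemma cos_gt0_lt_pihalf (s : R) : `|s| < pi -> 0 < cos s -> `|s| < pi / 2.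
Proof.
move=> spi cs; have pi0 := pi_gt0 R.
rewrite -(@ltr_cos R) ?cos_pihalf ?cos_norm // !in_itv /= ?normr_ge0 ?(ltW spi) //.
by apply/andP; split; lra.
Qed.

Lemma atanD (a b : R) : a * b < 1 -> atan a + atan b = atan ((a + b) / (1 - a * b)).
Proof.
move=> ab1.
have [/andP[A1 A2] tA] := atan_def a; have [/andP[B1 B2] tB] := atan_def b.
have cA : 0 < cos (atan a) by apply: cos_gt0_pihalf; rewrite A1 A2.
have cB : 0 < cos (atan b) by apply: cos_gt0_pihalf; rewrite B1 B2.
have sin_atan x : 0 < cos (atan x) -> sin (atan x) = x * cos (atan x).
  by move=> cx; rewrite -{2}(atanK x) /tan divfK ?gt_eqF.
have cAB : 0 < cos (atan a + atan b).
  rewrite cosD !sin_atan //.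
  have -> : cos (atan a) * cos (atan b) - a * cos (atan a) * (b * cos (atan b))
     = cos (atan a) * cos (atan b) * (1 - a * b) by ring.
  by rewrite !mulr_gt0 // subr_gt0.
have pi0 := pi_gt0 R.
have /cos_gt0_lt_pihalf : `|atan a + atan b| < pi.
  by rewrite ltr_norml; apply/andP; split; lra.
move=> /(_ cAB); rewrite ltr_norml => hs.
by rewrite -[in RHS]tA -[in RHS]tB -tanD ?gt_eqF // tanK // in_itv /= hs.
Qed.

Definition arg_rhp (w : R[i]) : R := atan (Im w / Re w).

Lemma arg_rhpM (x y : R[i]) : 0 < Re x -> 0 < Re y -> 0 < Re (x * y) ->
  arg_rhp (x * y) = arg_rhp x + arg_rhp y.
Proof.
case: x => a b; case: y => c d /= a0 c0 h.
have ac0 : 0 < a * c by apply: mulr_gt0.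
rewrite /arg_rhp /= atanD.
  by congr atan; field; rewrite !gt_eqF //= subr_gt0 -subr_gt0.
have -> : b / a * (d / c) = (b * d) / (a * c) by field; rewrite !gt_eqF.
by rewrite ltr_pdivrMr // mul1r -subr_gt0.
Qed.

(* [2 pi] times the winding number around 0 of the closed polygon
   [a 0, ..., a N = a 0], as long as consecutive vertices are seen from 0
   under angles smaller than [pi / 2]. *)
Definition wind (N : nat) (a : nat -> R[i]) : R :=
  \sum_(i < N) arg_rhp (a i.+1 / a i).

Lemma wind_const N (a : nat -> R[i]) : (forall i, a i = a 0%N) -> wind N a = 0.
Proof.
move=> a_const; rewrite /wind big1 // => i _; rewrite !a_const.
have [->|a0] := eqVneq (a 0%N) 0; first by rewrite mul0r /arg_rhp /= mul0r atan0.
by rewrite divff // /arg_rhp /= mul0r atan0.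
Qed.

(* Since [b / a] stays in the right half-plane, its angles telescope. *)
Lemma wind_eq (N : nat) (a b : nat -> R[i]) :
  a N = a 0%N -> b N = b 0%N ->
  (forall i, (i < N)%N -> normc (a i.+1 / a i - 1) <= 1 / 4) ->
  (forall i, (i < N)%N -> normc (b i.+1 / b i - 1) <= 1 / 4) ->
  (forall i, (i <= N)%N -> normc (b i / a i - 1) < 1) ->
  wind N a = wind N b.
Proof.
move=> aN bN ha hb hab; pose y i := b i / a i.
have q14 : (1 / 4 : R) < 1 by lra.
have step i : (i < N)%N -> arg_rhp (b i.+1 / b i)
    = arg_rhp (a i.+1 / a i) + (arg_rhp (y i.+1) - arg_rhp (y i)).
  move=> iN; have [bi ai] := near1_div_neq0 (hab i (ltnW iN)).
  have [bi1 ai1] := near1_div_neq0 (hab i.+1 iN).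
  pose w := y i.+1 / y i.
  have eb : b i.+1 / b i = (a i.+1 / a i) * w by rewrite /w /y; field; rewrite ai bi.
  have ey : y i.+1 = y i * w by rewrite /w; field; rewrite /y mulf_neq0 ?invr_eq0.
  have ew : w = (b i.+1 / b i) / (a i.+1 / a i) by rewrite /w /y; field; rewrite ai ai1 bi.
  have Rw : 0 < Re w by rewrite ew; apply/Re_gt0_near1/near1_div; [exact: ha | exact: hb].
  have Ra := Re_gt0_near1 (le_lt_trans (ha i iN) q14).
  have Rb := Re_gt0_near1 (le_lt_trans (hb i iN) q14).
  have Ry := Re_gt0_near1 (hab i (ltnW iN)); have Ry1 := Re_gt0_near1 (hab i.+1 iN).
  have e1 : arg_rhp (b i.+1 / b i) = arg_rhp (a i.+1 / a i) + arg_rhp w.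
    by rewrite eb arg_rhpM // -eb.
  have e2 : arg_rhp (y i.+1) = arg_rhp (y i) + arg_rhp w by rewrite ey arg_rhpM // -ey.
  by rewrite e1 e2; ring.
rewrite /wind (eq_bigr _ (fun (i : 'I_N) _ => step i (ltn_ord i))) big_split /=.
rewrite -(big_mkord xpredT (fun i => arg_rhp (y i.+1) - arg_rhp (y i))).
by rewrite telescope_sumr // /y aN bN subrr addr0.
Qed.

End Winding.

Section Circle.
Variable R : realType.
Local Notation normc := (@Normc.normc R).

Lemma ler_abs_sin (x : R) : `|sin x| <= `|x|.
Proof.
wlog x0 : x / 0 <= x.
  move=> h; have [/h //|x_lt0] := lerP 0 x.
  by rewrite -normrN -sinN -(normrN x) h // oppr_ge0 ltW.
have [c _ e] := MVT_segment x0 (fun c _ => is_derive_sin c)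
  (continuous_subspaceT (@continuous_sin R)).
by rewrite sin0 !subr0 in e; rewrite e normrM ler_piMl // cos_max.
Qed.

Definition expi (t : R) : R[i] := Complex (cos t) (sin t).

Lemma expiD s t : expi (s + t) = expi s * expi t.
Proof. by apply/eqP; rewrite eq_complex /= cosD sinD; apply/andP; split; apply/eqP; ring. Qed.

Lemma expi0 : expi 0 = 1.
Proof. by rewrite /expi cos0 sin0. Qed.

Lemma expi2pi : expi (pi *+ 2) = 1.
Proof. by rewrite /expi cos2pi sin2pi. Qed.

Lemma expiN t : (expi t)^*%C = expi (- t).
Proof. by rewrite /expi cosN sinN. Qed.

Lemma expiX t k : expi t ^+ k = expi (k%:R * t).
Proof.
elim: k => [|k IH]; first by rewrite mul0r expi0.
by rewrite exprS IH -expiD mulrS mulrDl mul1r.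
Qed.

Lemma normc_expi t : normc (expi t) = 1.
Proof. by rewrite /= cos2Dsin2 sqrtr1. Qed.

Lemma expi_neq0 t : expi t != 0.
Proof. by rewrite -normc_eq0 normc_expi oner_eq0. Qed.

Lemma normc_expiB1 t : normc (expi t - 1) <= `|t|.
Proof.
have ht : t = (t / 2) *+ 2 by rewrite -mulr_natr divfK ?pnatr_eq0.
have e : (cos t - 1) ^+ 2 + sin t ^+ 2 = (sin (t / 2) *+ 2) ^+ 2.
  rewrite {1 2}ht cos_mulr2n sin_mulr2n.
  have hc : cos (t / 2) ^+ 2 = 1 - sin (t / 2) ^+ 2 by rewrite cos2sin2.
  apply: (@eq_trans _ _ (((1 - sin (t / 2) ^+ 2) *+ 2 - 2) ^+ 2
                          + ((1 - sin (t / 2) ^+ 2) * sin (t / 2) ^+ 2) *+ 4)).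
    by rewrite -hc; ring.
  by ring.
rewrite /= subr0 e sqrtr_sqr normrMn {2}ht normrMn lerMn2r /=.
exact: ler_abs_sin.
Qed.

Lemma arg_rhp_expi t : `|t| < pi / 2 -> arg_rhp (expi t) = t.
Proof. by move=> ht; rewrite /arg_rhp /= -/(tan t) tanK // in_itv /= -ltr_norml. Qed.

Lemma normc_scale_expi (s t : R) : 0 <= s -> normc (s%:C%C * expi t) = s.
Proof. by move=> s0; rewrite Normc.normcM normc_expi mulr1 normc_real ger0_norm. Qed.

Definition circle_loop (f : R[i] -> R[i]) (s theta : R) (j : nat) : R[i] :=
  f (s%:C%C * expi (j%:R * theta)).

Lemma circle_loop_closed f s theta N : N%:R * theta = pi *+ 2 ->
  circle_loop f s theta N = circle_loop f s theta 0.
Proof. by move=> h; rewrite /circle_loop h expi2pi mul0r expi0. Qed.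

Lemma normc_circle_step s theta j : 0 <= s ->
  normc (s%:C%C * expi (j.+1%:R * theta) - s%:C%C * expi (j%:R * theta))
    <= s * `|theta|.
Proof.
move=> s0; rewrite mulrS mulrDl mul1r expiD.
have -> : forall u v : R[i], s%:C%C * (u * v) - s%:C%C * v = s%:C%C * v * (u - 1).
  by move=> u v; ring.
by rewrite Normc.normcM normc_scale_expi // ler_wpM2l // normc_expiB1.
Qed.

Lemma circle_loop_monomial a s theta l m j :
  circle_loop (polyan_monomial a l m) s theta j
    = a * s%:C%C ^+ (l + m) * expi (j%:R * (theta * (l%:R - m%:R))).
Proof.
rewrite /circle_loop /polyan_monomial.
have -> : (s%:C%C * expi (j%:R * theta))^*%C = s%:C%C * expi (- (j%:R * theta)).
  by rewrite rmorphM [X in X * _]conjc_real -expiN.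
have -> : j%:R * (theta * (l%:R - m%:R)) = l%:R * (j%:R * theta) + m%:R * - (j%:R * theta).
  by ring.
by rewrite !exprMn !expiX exprD expiD; ring.
Qed.
End Circle.

Section CircleWinding.
Variable R : realType.
Local Notation normc := (@Normc.normc R).
Implicit Types (f g : R[i] -> R[i]) (a : R[i]) (s theta : R).

Lemma circle_loop_monomial_ratio a s theta l m j : a != 0 -> s != 0 ->
  circle_loop (polyan_monomial a l m) s theta j.+1
    / circle_loop (polyan_monomial a l m) s theta j = expi (theta * (l%:R - m%:R)).
Proof.
move=> a0 s0; rewrite !circle_loop_monomial mulrS mulrDl mul1r addrC expiD.
rewrite mulrA mulrAC divff ?mul1r // !mulf_neq0 ?expi_neq0 ?expf_neq0 //.
by rewrite -normc_eq0 normc_real normr_eq0.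
Qed.

Lemma wind_circle_loop_monomial a s theta l m N : a != 0 -> s != 0 ->
  `|theta * (l%:R - m%:R)| < pi / 2 ->
  wind N (circle_loop (polyan_monomial a l m) s theta) = N%:R * (theta * (l%:R - m%:R)).
Proof.
move=> a0 s0 small; rewrite /wind (eq_bigr (fun=> theta * (l%:R - m%:R))).
  by rewrite sumr_const card_ord mulr_natl.
by move=> j _; rewrite circle_loop_monomial_ratio ?arg_rhp_expi.
Qed.

Lemma wind_circle_loop_dominated f g s theta N : 0 <= s -> N%:R * theta = pi *+ 2 ->
  (forall j, (j < N)%N ->
     normc (circle_loop f s theta j.+1 / circle_loop f s theta j - 1) <= 1 / 4) ->
  (forall j, (j < N)%N ->
     normc (circle_loop g s theta j.+1 / circle_loop g s theta j - 1) <= 1 / 4) ->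
  (forall z, normc z = s -> normc (f z - g z) < normc (g z)) ->
  wind N (circle_loop f s theta) = wind N (circle_loop g s theta).
Proof.
move=> s0 closed f_step g_step dominated; symmetry.
apply: wind_eq; rewrite ?circle_loop_closed // => j _.
have /dominated fg := normc_scale_expi (j%:R * theta) s0.
have g_gt0 := le_lt_trans (normc_ge0 _) fg.
by rewrite normc_divB1 ?ltr_pdivrMr ?mul1r // -normc_eq0 gt_eqF.
Qed.
End CircleWinding.

Section Lipschitz.
Variable R : realType.
Local Notation normc := (@Normc.normc R).
Implicit Types (z w : R[i]) (r : R).

Definition lipschitz_on_disc (f : R[i] -> R[i]) r (L : R) :=
  forall z w, normc z <= r -> normc w <= r -> normc (f z - f w) <= L * normc (z - w).

Lemma normc_subrX z w r (a : nat) : 1 <= r -> normc z <= r -> normc w <= r ->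
  normc (z ^+ a - w ^+ a) <= a%:R * r ^+ a * normc (z - w).
Proof.
move=> r1 hz hw; elim: a => [|a IH]; first by rewrite subrr Normc.normc0 !mul0r.
have -> : z ^+ a.+1 - w ^+ a.+1 = z * (z ^+ a - w ^+ a) + (z - w) * w ^+ a.
  by rewrite !exprS; ring.
have wa : normc (w ^+ a) <= r ^+ a.+1.
  have r0 : 0 <= r by lra.
  rewrite normcX (le_trans (lerXn2r _ _ _ hw)) ?nnegrE ?normc_ge0 //.
  by rewrite exprS ler_peMl ?exprn_ge0.
apply: le_trans (le_normcD _ _) _; rewrite !Normc.normcM.
have := ler_pM (normc_ge0 _) (normc_ge0 _) hz IH.
have := ler_wpM2l (normc_ge0 (z - w)) wa.
by rewrite mulrSr exprS; nra.
Qed.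

Lemma normc_monomialB z w r (a b : nat) : 1 <= r -> normc z <= r -> normc w <= r ->
  normc (z ^+ a * z^*%C ^+ b - w ^+ a * w^*%C ^+ b)
    <= (a + b)%:R * r ^+ (a + b) * normc (z - w).
Proof.
move=> r1 hz hw.
have -> : z ^+ a * z^*%C ^+ b - w ^+ a * w^*%C ^+ b =
  z ^+ a * (z^*%C ^+ b - w^*%C ^+ b) + (z ^+ a - w ^+ a) * w^*%C ^+ b by ring.
apply: le_trans (le_normcD _ _) _; rewrite !Normc.normcM !normcX normc_conj.
have hzb : normc (z^*%C ^+ b - w^*%C ^+ b) <= b%:R * r ^+ b * normc (z - w).
  by rewrite -(normc_conj (z - w)) rmorphB; apply: normc_subrX; rewrite ?normc_conj.
have hza := normc_subrX a r1 hz hw.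
have za : normc z ^+ a <= r ^+ a by rewrite lerXn2r ?nnegrE ?normc_ge0 //; lra.
have wb : normc w ^+ b <= r ^+ b by rewrite lerXn2r ?nnegrE ?normc_ge0 //; lra.
have := ler_pM (exprn_ge0 _ (normc_ge0 _)) (normc_ge0 _) za hzb.
have := ler_pM (normc_ge0 _) (exprn_ge0 _ (normc_ge0 _)) hza wb.
by rewrite natrD exprD; nra.
Qed.

Lemma polyan_eval_lipschitz n (alpha : nat -> nat -> R[i]) r : 1 <= r ->
  exists2 L, 0 <= L & lipschitz_on_disc (polyan_eval n alpha) r L.
Proof.
move=> r1; have r0 : 0 <= r by lra.
exists (\sum_(k < n.+1) \sum_(j < k.+1) normc (alpha j (k - j)%N) * (k%:R * r ^+ k)).
  by do 2!apply: sumr_ge0 => ? _; rewrite !mulr_ge0 ?normc_ge0 ?exprn_ge0.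
move=> z w hz hw; rewrite -sumrB mulr_suml; apply: le_trans (ler_normc_sum _ _ _) _.
apply: ler_sum => k _; rewrite -sumrB mulr_suml; apply: le_trans (ler_normc_sum _ _ _) _.
apply: ler_sum => j _; rewrite -!mulrA -mulrBr Normc.normcM ler_wpM2l ?normc_ge0 //.
by have := normc_monomialB j (k - j) r1 hz hw; rewrite subnKC -?mulrA // -ltnS.
Qed.

Lemma continuous_normc_lipschitz (f : R[i] -> R[i]) :
  (forall r, 1 <= r -> exists2 L, 0 <= L & lipschitz_on_disc f r L) ->
  continuous (fun p : R * R => normc (f (p.1 +i* p.2)%C)).
Proof.
move=> f_lip p; apply/cvgrPdist_lt => e e0.
pose r := `|p.1| + `|p.2| + 2.
have r1 : 1 <= r by rewrite /r; have := normr_ge0 p.1; have := normr_ge0 p.2; lra.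
have [L L0 hL] := f_lip r r1.
pose d := Num.min 1 (e / (2 * (L + 1))).
have d0 : 0 < d by rewrite lt_min ltr01 divr_gt0 //; lra.
have d1 : d <= 1 by rewrite ge_min lexx.
have dL : 2 * (L + 1) * d <= e by rewrite mulrC -ler_pdivlMr ?ge_min ?lexx ?orbT //; lra.
exists (ball p.1 d, ball p.2 d); first by split; apply: nbhsx_ballx.
case=> q1 q2 [/= h1 h2]; rewrite -ball_normE /= in h1 h2.
have hq (x y : R) : `|x - y| < d -> `|y| <= `|x| + 1.
  by move=> h; have := ler_normB x (x - y); rewrite opprB addrC subrK; lra.
have [hp1 _] := abs_le_normc p.1 p.2; have [_ hp2] := abs_le_normc p.1 p.2.
have hz : normc (p.1 +i* p.2)%C <= r.
  by apply: le_trans (normc_le_abs _ _) _; rewrite /r; lra.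
have hw : normc (q1 +i* q2)%C <= r.
  apply: le_trans (normc_le_abs _ _) _.
  by have := hq _ _ h1; have := hq _ _ h2; rewrite /r; lra.
have hzw : normc ((p.1 +i* p.2)%C - (q1 +i* q2)%C) < 2 * d.
  by apply: le_lt_trans (normc_le_abs _ _) _; lra.
apply: le_lt_trans (ler_normcB _ _) _; apply: le_lt_trans (hL _ _ hz hw) _.
by nra.
Qed.

Lemma exists_min_normc_disc (f : R[i] -> R[i]) r : 0 <= r ->
  continuous (fun p : R * R => normc (f (p.1 +i* p.2)%C)) -> (forall z, f z != 0) ->
  exists2 delta, 0 < delta & forall z, normc z <= r -> delta <= normc (f z).
Proof.
move=> r0 f_cont f_neq0.
pose square := `[- r, r]%classic `*` `[- r, r]%classic.
have square0 : square (0, 0) by split; rewrite /= in_itv /=; lra.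
have [c _ c_min] := compact_EVT_min (ex_intro _ _ square0)
  (compact_setX (@segment_compact _ _ _) (@segment_compact _ _ _))
  (continuous_subspaceT f_cont).
exists (normc (f (c.1 +i* c.2)%C)); first by rewrite lt0r normc_ge0 normc_eq0 f_neq0.
case=> a b h; apply: (c_min (a, b)); rewrite inE; have [ha hb] := abs_le_normc a b.
by split; rewrite /= in_itv /= -ler_norml; lra.
Qed.
End Lipschitz.

Section DiscWinding.
Variable R : realType.
Local Notation normc := (@Normc.normc R).
Variables (f : R[i] -> R[i]) (r L delta : R).
Hypotheses (r_ge0 : 0 <= r) (L_ge0 : 0 <= L) (delta_gt0 : 0 < delta).
Hypothesis f_lip : lipschitz_on_disc f r L.
Hypothesis f_ge : forall z, normc z <= r -> delta <= normc (f z).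

Lemma near1_ratio_disc z w : normc z <= r -> normc w <= r ->
  L * normc (z - w) <= delta / 4 -> normc (f z / f w - 1) <= 1 / 4.
Proof.
move=> hz hw hzw; have fw := f_ge hw.
have fw0 : f w != 0 by rewrite -normc_eq0 gt_eqF // (lt_le_trans delta_gt0).
rewrite normc_divB1 // ler_pdivrMr ?(lt_le_trans delta_gt0) //.
by have := f_lip hz hw; lra.
Qed.

Lemma circle_loop_step s theta j : 0 <= s <= r -> L * r * `|theta| <= delta / 4 ->
  normc (circle_loop f s theta j.+1 / circle_loop f s theta j - 1) <= 1 / 4.
Proof.
move=> /andP[s0 sr] h; apply: near1_ratio_disc; rewrite ?normc_scale_expi //.
apply: le_trans h; rewrite -mulrA ler_wpM2l //.
by rewrite (le_trans (normc_circle_step _ _ s0)) // ler_wpM2r.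
Qed.

(* Shrink the circle to its centre in [M] radial steps short enough for
   [wind_eq]: the winding stays constant and vanishes at the centre. *)
Lemma wind_circle_loop_eq0 N theta : N%:R * theta = pi *+ 2 ->
  L * r * `|theta| <= delta / 4 -> wind N (circle_loop f r theta) = 0.
Proof.
move=> closed h.
pose M := (Num.trunc (4 * L * r / delta)).+1.
have M0 : 0 < M%:R :> R by rewrite ltr0n.
pose s m := m%:R * (r / M%:R).
have s_in m : (m <= M)%N -> 0 <= s m <= r.
  move=> mM; rewrite /s mulr_ge0 ?divr_ge0 //= mulrCA ler_piMr //.
  by rewrite ler_pdivrMr // mul1r ler_nat.
have LrM : L * (r / M%:R) <= delta / 4.
  rewrite mulrA ler_pdivrMr // -ler_pdivrMl ?divr_gt0 //.
  have -> : (delta / 4)^-1 * (L * r) = 4 * L * r / delta by field; rewrite gt_eqF.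
  exact: ltW (truncnS_gt _).
have radial k t :
    L * normc ((s k.+1)%:C%C * expi t - (s k)%:C%C * expi t) <= delta / 4.
  rewrite -mulrBl Normc.normcM normc_expi mulr1 -rmorphB normc_real.
  by rewrite /s -mulrBl -natrB // subSnn mul1r ger0_norm ?divr_ge0.
have disc m t : (m <= M)%N -> normc ((s m)%:C%C * expi t) <= r.
  by move=> /s_in /andP[s0 sr]; rewrite normc_scale_expi.
have q14 : (1 / 4 : R) < 1 by lra.
have wind_m m : (m <= M)%N -> wind N (circle_loop f (s m) theta) = 0.
  elim: m => [_|m IH mM].
    by apply: wind_const => j; rewrite /circle_loop /s !mul0r.
  rewrite -(IH (ltnW mM)); symmetry; apply: wind_eq; rewrite ?circle_loop_closed //.
  - by move=> j _; apply: circle_loop_step; rewrite ?s_in 1?ltnW.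
  - by move=> j _; apply: circle_loop_step; rewrite ?s_in.
  - move=> j _; apply: le_lt_trans _ q14.
    by apply: near1_ratio_disc; [apply: disc | apply/disc/ltnW | apply: radial].
by have := wind_m M (leqnn M); rewrite /s mulrC divfK ?gt_eqF.
Qed.
End DiscWinding.

Section Dominance.
Variables (R : realType) (alpha : nat -> nat -> R[i]).
Local Notation normc := (@Normc.normc R).

Lemma normc_polyan_eval_le m z : 1 <= normc z ->
  normc (polyan_eval m alpha z)
    <= (\sum_(k < m.+1) \sum_(j < k.+1) normc (alpha j (k - j)%N)) * normc z ^+ m.
Proof.
move=> z1; apply: le_trans (ler_normc_sum _ _ _) _; rewrite mulr_suml.
apply: ler_sum => k _; apply: le_trans (ler_normc_sum _ _ _) _; rewrite mulr_suml.
apply: ler_sum => j _; have jk : (j <= k)%N by rewrite -ltnS.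
rewrite (normc_polyan_monomial (alpha j (k - j)%N)) subnKC // ler_wpM2l ?normc_ge0 //.
by rewrite ler_weXn2l // -ltnS.
Qed.

Lemma polyan_evalS m z : polyan_eval m.+1 alpha z = polyan_eval m alpha z
  + \sum_(j < m.+2) polyan_monomial (alpha j (m.+1 - j)%N) j (m.+1 - j) z.
Proof. by rewrite /polyan_eval big_ord_recr. Qed.

Lemma polyan_dominant_circle n l : (1 <= n)%N -> (l <= n)%N ->
  \sum_(j < n.+1 | j != l :> nat) normc (alpha j (n - j)%N) < normc (alpha l (n - l)%N) ->
  exists2 r, 1 <= r & forall z, normc z = r ->
    normc (polyan_eval n alpha z - polyan_monomial (alpha l (n - l)%N) l (n - l) z)
      < normc (polyan_monomial (alpha l (n - l)%N) l (n - l) z).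
Proof.
case: n => // n _ ln; set a := normc _; set s := \sum_(_ < _ | _) _ => dom.
set A := \sum_(k < n.+1) \sum_(j < k.+1) normc (alpha j (k - j)%N).
have A0 : 0 <= A by do 2!apply: sumr_ge0 => ? _; apply: normc_ge0.
have s0 : 0 <= s by apply: sumr_ge0 => ? _; apply: normc_ge0.
exists (Num.max 1 ((A + 1) / (a - s))); first by rewrite le_max lexx.
move=> z nz; set r := Num.max _ _ in nz.
have r1 : 1 <= r by rewrite le_max lexx.
have rA : A + 1 <= (a - s) * r.
  by rewrite mulrC -ler_pdivrMr ?subr_gt0 // le_max lexx orbT.
rewrite polyan_evalS (bigD1 (Ordinal (ln : l < n.+2)%N)) //= addrCA addrAC subrr add0r.
have low : normc (polyan_eval n alpha z) <= A * r ^+ n.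
  by rewrite -nz normc_polyan_eval_le // nz.
have others : normc (\sum_(j < n.+2 | j != Ordinal (ln : l < n.+2)%N)
    polyan_monomial (alpha j (n.+1 - j)%N) j (n.+1 - j) z) <= s * r ^+ n.+1.
  apply: le_trans (ler_normc_sum _ _ _) _; rewrite /s mulr_suml le_eqVlt; apply/orP; left.
  apply/eqP/eq_big => [j|j _]; first by [].
  by rewrite normc_polyan_monomial subnKC ?nz // -ltnS.
rewrite normc_polyan_monomial subnKC // nz; apply: le_lt_trans (le_normcD _ _) _.
apply: le_lt_trans (lerD low others) _.
have rn : 1 <= r ^+ n by apply: exprn_ege1.
by have := ler_wpM2r (le_trans ler01 rn) rA; rewrite exprS -/a; nra.
Qed.
End Dominance.

Lemma exists_fine_angle (R : realType) (K : R) : exists (N : nat) (theta : R),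
  [/\ N%:R * theta = pi *+ 2, 0 < theta & theta * K <= 1 / 4].
Proof.
pose N := (Num.trunc (8 * pi * K)).+1; have N0 : 0 < N%:R :> R by rewrite ltr0n.
exists N, (pi *+ 2 / N%:R); split.
- by rewrite mulrC divfK ?gt_eqF.
- by rewrite divr_gt0 // mulrn_wgt0 // pi_gt0.
rewrite mulrAC ler_pdivrMr // -mulr_natr.
by have := truncnS_gt (8 * pi * K); rewrite -/N; lra.
Qed.

Section DominantRoot.
Variables (R : realType) (n : nat) (alpha : nat -> nat -> R[i]).
Local Notation normc := (@Normc.normc R).
Local Notation P := (polyan_eval n alpha).

Lemma polyan_eval_root_of_dominant l : (1 <= n)%N -> (l <= n)%N -> (2 * l != n)%N ->
  \sum_(j < n.+1 | j != l :> nat) normc (alpha j (n - j)%N) < normc (alpha l (n - l)%N) ->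
  exists z, P z = 0.
Proof.
move=> n1 ln l2 dom; have [//|no_root] := pselect (exists z, P z = 0).
have P_neq0 z : P z != 0 by apply/eqP => Pz; apply: no_root; exists z.
have [r r1 dominant] := polyan_dominant_circle n1 ln dom.
have r0 : 0 <= r by lra.
have [L L0 lip] := polyan_eval_lipschitz n alpha r1.
have [delta delta0 P_ge] := exists_min_normc_disc r0
  (continuous_normc_lipschitz (@polyan_eval_lipschitz _ n alpha)) P_neq0.
pose d : R := l%:R - (n - l)%N%:R.
have d0 : d != 0.
  by rewrite subr_eq0 eqr_nat; apply: contra l2 => /eqP e; rewrite mul2n -addnn {2}e subnKC.
have [N [theta [closed theta0 fine]]] := exists_fine_angle (L * r / delta + `|d|).
have theta_lip : L * r * `|theta| <= delta / 4.
  have -> : L * r * `|theta| = delta * (theta * (L * r / delta)).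
    by rewrite gtr0_norm //; field; rewrite gt_eqF.
  rewrite (_ : delta / 4 = delta * (1 / 4)); last by rewrite mul1r.
  apply: ler_wpM2l; first exact: ltW.
  by apply: le_trans _ fine; rewrite ler_pM2l // lerDl.
have theta_d : `|theta * d| <= 1 / 4.
  apply: le_trans _ fine; rewrite normrM gtr0_norm // ler_pM2l // lerDr.
  by rewrite divr_ge0 ?mulr_ge0 // ltW.
have a0 : alpha l (n - l)%N != 0.
  rewrite -normc_eq0 gt_eqF // (le_lt_trans _ dom) //.
  by apply: sumr_ge0 => j _; apply: normc_ge0.
have r_neq0 : r != 0 by rewrite gt_eqF // (lt_le_trans ltr01).
have r_in : 0 <= r <= r by rewrite r0 lexx.
set lead := polyan_monomial (alpha l (n - l)%N) l (n - l) in dominant.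
have lead_step j : (j < N)%N ->
    normc (circle_loop lead r theta j.+1 / circle_loop lead r theta j - 1) <= 1 / 4.
  by move=> _; rewrite circle_loop_monomial_ratio // (le_trans (normc_expiB1 _)).
have := wind_circle_loop_dominated r0 closed
  (fun j _ => circle_loop_step L0 delta0 lip P_ge j r_in theta_lip) lead_step dominant.
rewrite (wind_circle_loop_eq0 r0 L0 delta0 lip P_ge closed theta_lip).
rewrite wind_circle_loop_monomial // -/d; last first.
  by apply: le_lt_trans theta_d _; have := @pi_ge2 R; lra.
rewrite mulrA closed => /esym/eqP; rewrite mulf_eq0 (negbTE d0) orbF.
by rewrite mulrn_eq0 /= gt_eqF ?pi_gt0.
Qed.
End DominantRoot.

Theorem theorem2p5 (R : realType) (n : nat) (alpha : nat -> nat -> R[i]) :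
  (1 <= n)%N ->
  ((exists2 l : nat, (l <= n)%N /\ (2 * l != n)%N &
      \sum_(j < n.+1 | j != l :> nat) `|alpha j (n - j)%N|
        < `|alpha l (n - l)%N|) ->
    exists z : R[i], polyan_eval n alpha z = 0)
  /\
  (forall l : nat, (l <= n)%N -> (2 * l != n)%N -> alpha l (n - l)%N != 0 ->
    (forall j : nat, (j <= n)%N -> j != l -> alpha j (n - j)%N = 0) ->
    exists z : R[i], polyan_eval n alpha z = 0).
Proof.
move=> n1; split.
  case=> l [ln l2]; rewrite normrE_normc.
  under eq_bigr => j _ do rewrite normrE_normc.
  by rewrite -(raddf_sum (real_complex R)) ltcR; apply: polyan_eval_root_of_dominant.
move=> l ln l2 a0 others; apply: (polyan_eval_root_of_dominant n1 ln l2).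
rewrite big1 ?lt0r ?normc_ge0 ?normc_eq0 ?a0 // => j jl.
by rewrite others ?Normc.normc0 // -ltnS.
Qed.
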